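(* Let $D$ be a digraph with $n\ge 2$ vertices and $a$ arcs, and let $\alpha\in[0,1)$. Let $\sigma_{1\alpha}(D)$ be the largest singular value of $A_\alpha(D)$. Then $$\sigma_{1\alpha}(D)\ge \frac{a}{n},$$ with equality if and only if $D$ is $\frac{a}{n}$-regular, i.e. every vertex of $D$ has outdegree $\frac an$ and indegree $\frac an$.
   Context: Digraphs are simple: a finite vertex set and a set of arcs, which are ordered pairs of distinct vertices, with no parallel arcs. For a digraph $D$ on vertices $v_1,\dots,v_n$, the adjacency matrix $A(D)=(a_{ij})$ has $a_{ij}=1$ if $(v_i,v_j)$ is an arc and $0$ otherwise; $d_i^+$ is the outdegree of $v_i$, and $\Delta^+(D)=\mathrm{diag}(d_1^+,\dots,d_n^+)$. For $\alpha\in[0,1)$, $A_\alpha(D)=\alpha\Delta^+(D)+(1-\alpha)A(D)$. The singular values of a real square matrix $B$ are the nonnegative square roots of the eigenvalues of $BB^{T}$, counted with multiplicity. *)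

From HB Require Import structures.
From mathcomp Require Import all_boot all_order all_algebra.
From mathcomp Require Import reals.
Set Implicit Arguments. Unset Strict Implicit. Unset Printing Implicit Defensive.
Import Order.TTheory GRing.Theory Num.Theory.
Local Open Scope ring_scope.

(* A simple digraph on vertex set 'I_n: its arc set D, a finite set of ordered
   pairs; simplicity (no loops) is the predicate [simple_digraph D].
   Parallel arcs are impossible since D is a set. *)
Definition simple_digraph (n : nat) (D : {set 'I_n * 'I_n}) : Prop :=
  forall i : 'I_n, (i, i) \notin D.

Definition outdeg (n : nat) (D : {set 'I_n * 'I_n}) (i : 'I_n) : nat :=
  #|[set j : 'I_n | (i, j) \in D]|.

Definition indeg (n : nat) (D : {set 'I_n * 'I_n}) (j : 'I_n) : nat :=
  #|[set i : 'I_n | (i, j) \in D]|.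

Definition adjmx (R : realType) (n : nat) (D : {set 'I_n * 'I_n}) : 'M[R]_n :=
  \matrix_(i, j) (((i, j) \in D) : nat)%:R.

Definition outdegmx (R : realType) (n : nat) (D : {set 'I_n * 'I_n}) : 'M[R]_n :=
  diag_mx (\row_i (outdeg D i)%:R).

Definition A_alpha (R : realType) (n : nat) (alpha : R) (D : {set 'I_n * 'I_n})
  : 'M[R]_n :=
  alpha *: outdegmx R D + (1 - alpha) *: adjmx R D.

Definition singular_value (R : realType) (n : nat) (B : 'M[R]_n) (s : R) : Prop :=
  0 <= s /\ eigenvalue (B *m B^T) (s ^+ 2).

Definition largest_singular_value (R : realType) (n : nat) (B : 'M[R]_n) (s : R)
  : Prop :=
  singular_value B s /\ (forall t, singular_value B t -> t <= s).

Definition regular_digraph (R : realType) (n : nat) (D : {set 'I_n * 'I_n}) (r : R)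
  : Prop :=
  forall i : 'I_n, (outdeg D i)%:R = r /\ (indeg D i)%:R = r.

From HB Require Import structures.
From mathcomp Require Import all_boot all_order all_algebra.
From mathcomp Require Import reals complex.
From mathcomp Require Import ring.
Import Order.TTheory GRing.Theory Num.Theory.
Local Open Scope ring_scope.
Set Implicit Arguments. Unset Strict Implicit. Unset Printing Implicit Defensive.

(* Let B = A_alpha(D) and let lam be the largest eigenvalue of the symmetric
   matrix B B^T, so that the largest singular value of B is sqrt lam.  The
   Rayleigh quotient of B B^T at the all-ones vector is (1/n) sum_j c_j^2, where
   the column sums c_j = alpha d+_j + (1 - alpha) d-_j add up to a; by
   Cauchy-Schwarz it is at least (a/n)^2, whence sqrt lam >= a/n.  If equality
   holds, Cauchy-Schwarz is tight and every c_j equals a/n; B^T B has the same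
   nonzero eigenvalues, so the same argument applied to the row sums d+_i gives
   d+_i = a/n, and then d-_j = a/n.  Conversely, if D is r-regular then B B^T
   is nonnegative with all column sums r^2, so none of its eigenvalues exceeds
   r^2. *)

Lemma exists_arg_max (R : realDomainType) n (g : 'I_n -> R) :
  (0 < n)%N -> exists k, forall i, g i <= g k.
Proof.
move=> n_gt0; case: (@arg_maxP _ _ _ (Ordinal n_gt0) xpredT g isT) => k _ kmax.
by exists k => i; apply: kmax.
Qed.

Section RealMatrices.
Variable R : realFieldType.

Lemma sum_sqr_dev n (u : 'I_n -> R) : (0 < n)%N ->
  \sum_i (u i - (\sum_j u j) / n%:R) ^+ 2
    = \sum_i u i ^+ 2 - ((\sum_j u j) / n%:R) ^+ 2 * n%:R.
Proof.
move=> n_gt0; set S := \sum_j u j.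
have nz : (n%:R : R) != 0 by rewrite pnatr_eq0 -lt0n.
under eq_bigr do rewrite sqrrB.
rewrite !big_split /= sumrN sumr_const card_ord sumrMnl -mulr_suml -/S.
rewrite -[_ *+ n]mulr_natr -[_ *+ 2]mulr_natr.
by field.
Qed.

Lemma sqr_mean_le n (u : 'I_n -> R) : (0 < n)%N ->
  ((\sum_i u i) / n%:R) ^+ 2 * n%:R <= \sum_i u i ^+ 2.
Proof.
move=> n_gt0; rewrite -subr_ge0 -sum_sqr_dev //.
by apply: sumr_ge0 => i _; apply: sqr_ge0.
Qed.

Lemma eq_mean_of_sum_sqr_le n (u : 'I_n -> R) : (0 < n)%N ->
  \sum_i u i ^+ 2 <= ((\sum_i u i) / n%:R) ^+ 2 * n%:R ->
  forall j, u j = (\sum_i u i) / n%:R.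
Proof.
move=> n_gt0 le_sum j; set m := (\sum_i u i) / n%:R.
have dev0 : \sum_i (u i - m) ^+ 2 = 0.
  apply/eqP; rewrite eq_le [0 <= _]sumr_ge0 => [|i _]; last exact: sqr_ge0.
  by rewrite andbT sum_sqr_dev // subr_le0.
have /eqP := @psumr_eq0P _ _ _ _ (fun i _ => sqr_ge0 (u i - m)) dev0 j isT.
by rewrite sqrf_eq0 subr_eq0 => /eqP.
Qed.

Lemma mulmx_tr_sym m n (B : 'M[R]_(m, n)) : (B *m B^T)^T = B *m B^T.
Proof. by rewrite trmx_mul trmxK. Qed.

Lemma mulmx_tr_sum_sqr n (x : 'rV[R]_n) : (x *m x^T) 0 0 = \sum_j x 0 j ^+ 2.
Proof. by rewrite mxE; apply: eq_bigr => j _; rewrite mxE expr2. Qed.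

Lemma const1_mulmx m n (B : 'M[R]_(m, n)) j :
  ((const_mx 1 : 'rV[R]_m) *m B) 0 j = \sum_i B i j.
Proof. by rewrite mxE; apply: eq_bigr => i _; rewrite mxE mul1r. Qed.

Lemma eigenvalue_mulmx_tr_ge0 m n (B : 'M[R]_(m, n)) mu :
  eigenvalue (B *m B^T) mu -> 0 <= mu.
Proof.
move=> /eigenvalueP [v vE v_neq0].
have v_pos : 0 < (v *m v^T) 0 0.
  rewrite mulmx_tr_sum_sqr lt_def psumr_eq0 => [|i _]; last exact: sqr_ge0.
  rewrite sumr_ge0 ?andbT => [|i _]; last exact: sqr_ge0.
  apply: contra v_neq0 => /allP v0; apply/eqP/rowP => j; rewrite mxE.
  by apply/eqP; rewrite -sqrf_eq0; apply: v0; rewrite mem_index_enum.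
have mu_vvT : mu * (v *m v^T) 0 0 = ((v *m B) *m (v *m B)^T) 0 0.
  by rewrite trmx_mul !mulmxA -(mulmxA v) vE -scalemxAl [RHS]mxE.
rewrite -(pmulr_lge0 _ v_pos) mu_vvT mulmx_tr_sum_sqr.
by apply: sumr_ge0 => j _; apply: sqr_ge0.
Qed.

Lemma eigenvalue_tr_mulmx m n (B : 'M[R]_(m, n)) mu : mu != 0 ->
  eigenvalue (B^T *m B) mu -> eigenvalue (B *m B^T) mu.
Proof.
move=> mu_neq0 /eigenvalueP [v vE v_neq0]; apply/eigenvalueP.
exists (v *m B^T); first by rewrite mulmxA -(mulmxA v) vE scalemxAl.
apply: contraNneq v_neq0 => vBT0.
have /eqP : mu *: v = 0 by rewrite -vE mulmxA vBT0 mul0mx.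
by rewrite scaler_eq0 (negbTE mu_neq0).
Qed.

Lemma colsum_mulmx_tr m n (B : 'M[R]_(m, n)) c k :
  (forall j, \sum_i B i j = c) -> \sum_i (B *m B^T) i k = c * \sum_j B k j.
Proof.
move=> colsumB; under eq_bigr do rewrite mxE.
rewrite exchange_big mulr_sumr; apply: eq_bigr => j _ /=.
by rewrite -(colsumB j) mulr_suml; apply: eq_bigr => i _; rewrite mxE.
Qed.

Lemma eigenvalue_le_colsum n (M : 'M[R]_n) c mu :
  (forall i k, 0 <= M i k) -> (forall k, \sum_i M i k = c) ->
  eigenvalue M mu -> mu <= c.
Proof.
move=> M_ge0 colsumM /eigenvalueP [v vE v_neq0].
have n_gt0 : (0 < n)%N.
  by case: n M M_ge0 colsumM v vE v_neq0 => // M _ _ v _; rewrite thinmx0 eqxx.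
have [k kmax] := exists_arg_max (fun i => `|v 0 i|) n_gt0.
have vk_gt0 : 0 < `|v 0 k|.
  rewrite normr_gt0; apply: contraNneq v_neq0 => vk0; apply/eqP/rowP => j.
  by apply/eqP; rewrite mxE -normr_le0 (le_trans (kmax j)) // vk0 normr0.
have mu_vk : mu * v 0 k = \sum_i v 0 i * M i k.
  by have /rowP /(_ k) := vE; rewrite !mxE => <-.
have : `|mu| * `|v 0 k| <= c * `|v 0 k|.
  rewrite -normrM mu_vk -(colsumM k) mulr_suml.
  apply: le_trans (ler_norm_sum _ _ _) _; apply: ler_sum => i _.
  by rewrite normrM (ger0_norm (M_ge0 i k)) mulrC ler_wpM2l.
by rewrite ler_pM2r //; apply: le_trans; apply: real_ler_norm; rewrite num_real.
Qed.

End RealMatrices.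

Section RealSymmetricMatrix.
Variables (R : rcfType) (n : nat) (M : 'M[R]_n).
Hypothesis M_sym : M^T = M.

(* The spectral theorem is only available over a closed field: M is
   diagonalized as a hermitian matrix over R[i], whose diagonal is real. *)
Local Notation toC := (real_complex R).
Let Mc := map_mx toC M.
Let P := spectralmx Mc.
Let ev (i : 'I_n) : R := complex.Re (spectral_diag Mc 0 i).

Let Mc_hermitian : Mc \is hermsymmx.
Proof.
apply: realsym_hermsym; last by apply/mxOverP => i j; rewrite mxE complex_real.
apply/is_hermitianmxP; rewrite expr0 scale1r map_mx_id //.
by apply/matrixP => i j; rewrite !mxE -[in LHS]M_sym mxE.
Qed.

Let Mc_diag : Mc = invmx P *m diag_mx (spectral_diag Mc) *m P.
Proof. exact/orthomx_spectralP/hermitian_normalmx. Qed.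

Let P_unitary : P \is unitarymx.
Proof. exact: spectral_unitarymx. Qed.

Let P_unit : P \in unitmx.
Proof. exact: unitarymx_unit. Qed.

Let spectral_diagE i : spectral_diag Mc 0 i = toC (ev i).
Proof.
have /mxOverP diag_real := hermitian_spectral_diag_real Mc_hermitian.
by rewrite RRe_real.
Qed.

Let eigenvalue_ev i : eigenvalue M (ev i).
Proof.
rewrite -(eigenvalue_map toC); apply/eigenvalueP; exists (row i P).
  rewrite -/Mc Mc_diag !mulmxA -row_mul mulmxV // row1.
  by rewrite -rowE row_diag_mx -scalemxAl -rowE spectral_diagE.
rewrite rowE mulmx_free_eq0 ?row_free_unit //; apply/eqP => /matrixP/(_ 0 i).
by rewrite !mxE !eqxx => /eqP; rewrite oner_eq0.
Qed.

Let eigenvalue_evP mu : eigenvalue M mu -> exists i, mu = ev i.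
Proof.
rewrite -(eigenvalue_map toC) => /eigenvalueP [v vE v_neq0].
pose w := v *m invmx P.
have wE : w *m diag_mx (spectral_diag Mc) = toC mu *: w.
  have vE' : v *m Mc = toC mu *: v := vE.
  have := congr1 (mulmx^~ (invmx P)) vE'.
  by rewrite /= {1}Mc_diag !mulmxA mulmxK // -scalemxAl.
have [i wi_neq0] : exists i, w 0 i != 0.
  apply/existsP; apply: contraR v_neq0 => /existsPn w0.
  have -> : v = w *m P by rewrite /w mulmxKV.
  suff -> : w = 0 by rewrite mul0mx.
  by apply/rowP => j; rewrite [RHS]mxE; apply/eqP; move/negbNE: (w0 j).
exists i; apply: complexI; apply: (mulIf wi_neq0).
move/rowP: wE => /(_ i); rewrite mul_mx_diag !mxE -spectral_diagE.
by rewrite mulrC.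
Qed.

Let quad_form_le c (x : 'rV[R]_n) : (forall i, ev i <= c) ->
  (x *m M *m x^T) 0 0 <= c * (x *m x^T) 0 0.
Proof.
move=> ev_le; rewrite -lecR rmorphM /=.
pose xc := map_mx toC x; pose y := xc *m invmx P.
have yC : map_mx Num.conj y^T = P *m xc^T.
  rewrite /y trmx_mul map_mxM invmx_unitary // trmxCK -map_trmx realmxC //.
  by apply/mxOverP => i j; rewrite !mxE complex_real.
have xMx : toC ((x *m M *m x^T) 0 0)
    = (y *m diag_mx (spectral_diag Mc) *m map_mx Num.conj y^T) 0 0.
  have -> : toC ((x *m M *m x^T) 0 0) = (xc *m Mc *m xc^T) 0 0.
    by rewrite /xc /Mc map_trmx -!map_mxM [RHS]mxE.
  by rewrite {1}Mc_diag yC /y !mulmxA.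
have xx : toC ((x *m x^T) 0 0) = (y *m map_mx Num.conj y^T) 0 0.
  by rewrite yC /y mulmxA mulmxKV // /xc map_trmx -map_mxM [RHS]mxE.
rewrite xMx xx !mxE mulr_sumr; apply: ler_sum => j _.
rewrite mul_mx_diag !mxE mulrAC [_ * spectral_diag Mc 0 j]mulrC.
apply: ler_wpM2r; first by rewrite -normCK exprn_ge0.
by rewrite spectral_diagE lecR.
Qed.

Lemma symmetric_max_eigenvalue : (0 < n)%N ->
  exists lam, eigenvalue M lam /\ forall mu, eigenvalue M mu -> mu <= lam.
Proof.
move=> n_gt0; have [k kmax] := exists_arg_max ev n_gt0.
by exists (ev k); split => // _ /eigenvalue_evP [i ->].
Qed.

Lemma symmetric_rayleigh c (x : 'rV[R]_n) :
  (forall mu, eigenvalue M mu -> mu <= c) ->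
  (x *m M *m x^T) 0 0 <= c * (x *m x^T) 0 0.
Proof. by move=> c_ub; apply: quad_form_le => i; apply/c_ub. Qed.

End RealSymmetricMatrix.

Section LineSumBounds.
Variable R : rcfType.

Lemma sum_colsum_sqr_le m n (B : 'M[R]_(m, n)) lam :
  (forall mu, eigenvalue (B *m B^T) mu -> mu <= lam) ->
  \sum_j (\sum_i B i j) ^+ 2 <= lam * m%:R.
Proof.
move=> lam_ub; pose x := const_mx 1 : 'rV[R]_m.
have xx : (x *m x^T) 0 0 = m%:R.
  rewrite mulmx_tr_sum_sqr (eq_bigr (fun=> 1)) ?sumr_const ?card_ord // => i _.
  by rewrite mxE expr1n.
have := symmetric_rayleigh (mulmx_tr_sym B) x lam_ub.
have -> : x *m (B *m B^T) *m x^T = (x *m B) *m (x *m B)^T.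
  by rewrite trmx_mul !mulmxA.
by rewrite xx mulmx_tr_sum_sqr; under eq_bigr do rewrite const1_mulmx.
Qed.

Lemma sum_rowsum_sqr_le m n (B : 'M[R]_(m, n)) lam : 0 <= lam ->
  (forall mu, eigenvalue (B *m B^T) mu -> mu <= lam) ->
  \sum_i (\sum_j B i j) ^+ 2 <= lam * n%:R.
Proof.
move=> lam_ge0 lam_ub.
have lam_ubT mu : eigenvalue (B^T *m B^T^T) mu -> mu <= lam.
  rewrite trmxK; have [-> // | mu_neq0] := eqVneq mu 0.
  by move/(eigenvalue_tr_mulmx mu_neq0)/lam_ub.
suff -> : \sum_i (\sum_j B i j) ^+ 2 = \sum_i (\sum_j B^T j i) ^+ 2.
  exact: sum_colsum_sqr_le.
by apply: eq_bigr => i _; congr (_ ^+ 2); apply: eq_bigr => j _; rewrite mxE.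
Qed.

End LineSumBounds.

Lemma largest_singular_valueE (R : realType) n (B : 'M[R]_n) lam :
  eigenvalue (B *m B^T) lam ->
  (forall mu, eigenvalue (B *m B^T) mu -> mu <= lam) ->
  forall s, largest_singular_value B s <-> s = Num.sqrt lam.
Proof.
move=> lamE lam_ub s; have lam_ge0 := eigenvalue_mulmx_tr_ge0 lamE.
have le_sqrt t : 0 <= t -> (t <= Num.sqrt lam) = (t ^+ 2 <= lam).
  by move=> t_ge0; rewrite -[RHS]ler_sqrt // sqrtr_sqr ger0_norm.
have sqrt_sv : singular_value B (Num.sqrt lam).
  by split; rewrite ?sqrtr_ge0 ?sqr_sqrtr.
split=> [[[s_ge0 sE] s_max] | ->].
  by apply/eqP; rewrite eq_le s_max // le_sqrt // lam_ub.
by split=> // t [t_ge0 tE]; rewrite le_sqrt // lam_ub.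
Qed.

Section DigraphDegrees.
Variables (n : nat) (D : {set 'I_n * 'I_n}).

Lemma outdegE i : outdeg D i = (\sum_j ((i, j) \in D))%N.
Proof. by rewrite /outdeg -sum1dep_card big_mkcond. Qed.

Lemma indegE j : indeg D j = (\sum_i ((i, j) \in D))%N.
Proof. by rewrite /indeg -sum1dep_card big_mkcond. Qed.

Lemma sum_outdeg : (\sum_i outdeg D i)%N = #|D|.
Proof.
under eq_bigr do rewrite outdegE.
rewrite pair_big -sum1_card [RHS]big_mkcond.
by apply: eq_big => // -[i j] _ /=; case: ifP.
Qed.

End DigraphDegrees.

Section AlphaAdjacency.
Variables (R : realType) (n : nat) (D : {set 'I_n * 'I_n}) (alpha : R).
Local Notation B := (A_alpha alpha D).

Lemma A_alphaE i j : B i j =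
  (i == j)%:R * (alpha * (outdeg D i)%:R) + (1 - alpha) * ((i, j) \in D)%:R.
Proof.
rewrite /A_alpha /outdegmx /adjmx !mxE.
by case: eqP => [->|_]; rewrite ?mulr1n ?mulr0n ?mul1r ?mul0r ?mulr0.
Qed.

Lemma rowsum_A_alpha i : \sum_j B i j = (outdeg D i)%:R.
Proof.
under eq_bigr do rewrite A_alphaE.
rewrite big_split /= -mulr_sumr -natr_sum -outdegE.
rewrite (bigD1 i) //= eqxx mul1r big1 ?addr0; last first.
  by move=> j; rewrite eq_sym => /negbTE ->; rewrite mul0r.
by rewrite mulrBl mul1r addrC subrK.
Qed.

Lemma colsum_A_alpha j :
  \sum_i B i j = alpha * (outdeg D j)%:R + (1 - alpha) * (indeg D j)%:R.
Proof.
under eq_bigr do rewrite A_alphaE.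
rewrite big_split /= -mulr_sumr -natr_sum -indegE.
rewrite (bigD1 j) //= eqxx mul1r big1 ?addr0 // => i.
by move/negbTE ->; rewrite mul0r.
Qed.

Lemma sum_colsum_A_alpha : \sum_j \sum_i B i j = #|D|%:R.
Proof.
rewrite exchange_big -sum_outdeg natr_sum.
by apply: eq_bigr => i _; rewrite rowsum_A_alpha.
Qed.

Lemma A_alpha_ge0 i j : 0 <= alpha -> alpha <= 1 -> 0 <= B i j.
Proof.
move=> alpha_ge0 alpha_le1; rewrite A_alphaE.
by rewrite addr_ge0 ?mulr_ge0 ?subr_ge0.
Qed.

Lemma eigenvalue_le_regular r mu : 0 <= alpha -> alpha <= 1 ->
  regular_digraph D r -> eigenvalue (B *m B^T) mu -> mu <= r ^+ 2.
Proof.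
move=> alpha_ge0 alpha_le1 D_reg.
have colsumB j : \sum_i B i j = r.
  rewrite colsum_A_alpha; have [-> ->] := D_reg j.
  by rewrite -mulrDl addrC subrK mul1r.
apply: eigenvalue_le_colsum => [i k | k].
  rewrite mxE; apply: sumr_ge0 => j _.
  by rewrite [B^T j k]mxE mulr_ge0 ?A_alpha_ge0.
have [outdeg_k _] := D_reg k.
by rewrite (colsum_mulmx_tr _ colsumB) rowsum_A_alpha outdeg_k expr2.
Qed.

End AlphaAdjacency.

Section AlphaSpectralRadius.
Variables (R : realType) (n : nat) (D : {set 'I_n * 'I_n}) (alpha lam : R).
Local Notation B := (A_alpha alpha D).
Local Notation r := (#|D|%:R / n%:R : R).
Hypothesis n_gt0 : (0 < n)%N.
Hypothesis lam_ge0 : 0 <= lam.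
Hypothesis lam_ub : forall mu, eigenvalue (B *m B^T) mu -> mu <= lam.

Let n_pos : (0 : R) < n%:R.
Proof. by rewrite ltr0n. Qed.

Lemma sqr_avgdeg_le : r ^+ 2 <= lam.
Proof.
rewrite -(ler_pM2r n_pos); apply: le_trans (sum_colsum_sqr_le lam_ub).
have := sqr_mean_le (fun j => \sum_i B i j) n_gt0.
by rewrite sum_colsum_A_alpha.
Qed.

Hypothesis alpha_lt1 : alpha < 1.

Lemma regular_of_le_sqr_avgdeg : lam <= r ^+ 2 -> regular_digraph D r.
Proof.
move=> lam_le.
have avg_const (u : 'I_n -> R) : \sum_i u i = #|D|%:R ->
    \sum_i u i ^+ 2 <= lam * n%:R -> forall j, u j = r.
  move=> sum_u le_u j; rewrite -sum_u; apply: eq_mean_of_sum_sqr_le => //.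
  by rewrite sum_u (le_trans le_u) // ler_pM2r.
have outdeg_r : forall i, (outdeg D i)%:R = r.
  apply: avg_const; first by rewrite -natr_sum sum_outdeg.
  under eq_bigr do rewrite -(rowsum_A_alpha D alpha).
  exact: sum_rowsum_sqr_le.
have colsum_r :=
  avg_const _ (sum_colsum_A_alpha D alpha) (sum_colsum_sqr_le lam_ub).
have alpha_neq1 : 1 - alpha != 0 by rewrite subr_eq0 eq_sym lt_eqF.
move=> j; split => //; apply: (mulfI alpha_neq1).
have := colsum_r j; rewrite colsum_A_alpha outdeg_r => colsum_j.
by rewrite [RHS]mulrBl mul1r; apply/eqP; rewrite eq_sym subr_eq addrC colsum_j.
Qed.

End AlphaSpectralRadius.

Theorem lemma2p9 (R : realType) (n : nat) (D : {set 'I_n * 'I_n}) (alpha : R) :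
  (2 <= n)%N -> simple_digraph D -> 0 <= alpha -> alpha < 1 ->
  (exists s : R, largest_singular_value (A_alpha alpha D) s) /\
  (forall s : R, largest_singular_value (A_alpha alpha D) s ->
     #|D|%:R / n%:R <= s /\
     (s = #|D|%:R / n%:R <-> regular_digraph D (#|D|%:R / n%:R : R))).
Proof.
move=> n_ge2 _ alpha_ge0 alpha_lt1; have n_gt0 : (0 < n)%N := ltnW n_ge2.
set r : R := #|D|%:R / n%:R.
have [lam [lamE lam_ub]] :=
  symmetric_max_eigenvalue (mulmx_tr_sym (A_alpha alpha D)) n_gt0.
have lam_ge0 := eigenvalue_mulmx_tr_ge0 lamE.
have r2_le := sqr_avgdeg_le n_gt0 lam_ub.
have sqrt_r2 : Num.sqrt (r ^+ 2) = r by rewrite sqrtr_sqr ger0_norm ?divr_ge0.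
have svE := largest_singular_valueE lamE lam_ub.
split; first by exists (Num.sqrt lam); apply/svE.
move=> s /svE ->.
split; first by rewrite -sqrt_r2 ler_sqrt.
split=> [sqrt_lam_r | D_reg].
  apply: (regular_of_le_sqr_avgdeg n_gt0 lam_ge0 lam_ub alpha_lt1).
  by rewrite -/r -sqrt_lam_r sqr_sqrtr.
rewrite -sqrt_r2; congr Num.sqrt; apply/eqP; rewrite eq_le r2_le andbT.
exact: eigenvalue_le_regular alpha_ge0 (ltW alpha_lt1) D_reg lamE.
Qed.
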